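(* If $\|g\|_{L^\infty(\mathbb{R}^n)}\le\kappa_3/2$, then for every set $F\subseteq\mathbb{R}^n$ and every $R>1$, $$\mathcal E(F,B_R):=\iint_{B_R\times\mathbb{R}^n}\chi_F(x)\chi_{F^c}(y)K(x,y)\,dx\,dy+\int_{\mathcal Q(B_R)_1\cap F}g(x)\,dx\ \ge\ 0.$$
   Context: Standing assumptions: $n\ge2$, $Q=(0,1)^n$. The kernel $K:\mathbb{R}^n\times\mathbb{R}^n\to[0,\infty)$ is measurable and satisfies: (K1) $K(y,x)=K(x,y)=K(x+w,y+w)=K(Rx,Ry)$ for all $x,y,w\in\mathbb{R}^n$ and all $R\in SO(n)$; (K2) $\int_{\mathbb{R}^n}|h|\,K(h,0)\,dh<\infty$; (K3) there are constants $0<s_1<\tfrac12<s_2<1$, $\delta>0$ and $0<\kappa_1\le\kappa_2$ such that $\kappa_1\,\chi_{(0,\delta)}(|x-y|)\,|x-y|^{-n-2s_1}\le K(x,y)\le\kappa_2\min\{|x-y|^{-n-2s_1},|x-y|^{-n-2s_2}\}$ for all $x\neq y$; (K4) $\inf_{(x,y)\in Q\times Q}K(x,y)\ge\kappa_3$ for some constant $\kappa_3>0$. The forcing term $g\in L^\infty(\mathbb{R}^n)$ is $\mathbb{Z}^n$-periodic with $\int_Q g(x)\,dx=0$. $B_R$ is the open ball of radius $R$ centered at the origin, $F^c=\mathbb{R}^n\setminus F$, and $\mathcal Q(B_R)_1$ is the union of all cubes $k+Q$, $k\in\mathbb{Z}^n$, contained in $B_R$. *)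

(* R^n is modelled as n.-tuple R,
   which carries the library's product (coordinate) sigma-algebra. *)
From HB Require Import structures.
From mathcomp Require Import all_boot all_order all_algebra.
From mathcomp Require Import all_classical all_reals all_analysis ess_sup_inf.
Set Implicit Arguments. Unset Strict Implicit. Unset Printing Implicit Defensive.
Import Order.TTheory GRing.Theory Num.Theory.
Local Open Scope ring_scope.
Local Open Scope classical_set_scope.

Section Rn.
Context {R : realType} {n : nat}.

Definition vzero : n.-tuple R := [tuple (0 : R) | i < n].
Definition vadd (x y : n.-tuple R) : n.-tuple R :=
  [tuple tnth x i + tnth y i | i < n].
Definition vsub (x y : n.-tuple R) : n.-tuple R :=
  [tuple tnth x i - tnth y i | i < n].
Definition enorm (x : n.-tuple R) : R := Num.sqrt (\sum_(i < n) tnth x i ^+ 2).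
Definition intvec (k : n.-tuple int) : n.-tuple R :=
  [tuple (tnth k i)%:~R | i < n].
Definition is_SO (M : 'M[R]_n) : Prop := M^T *m M = 1%:M /\ \det M = 1.
Definition rotv (M : 'M[R]_n) (x : n.-tuple R) : n.-tuple R :=
  [tuple \sum_(j < n) M i j * tnth x j | i < n].

Definition cubeQ : set (n.-tuple R) := [set x | forall i, 0 < tnth x i < 1].
Definition cube_at (k : n.-tuple int) : set (n.-tuple R) :=
  [set x | exists2 q, cubeQ q & x = vadd (intvec k) q].
Definition ballO (r : R) : set (n.-tuple R) := [set x | enorm x < r].
Definition cubes_in_ball (r : R) : set (n.-tuple R) :=
  [set x | exists k : n.-tuple int, cube_at k `<=` ballO r /\ cube_at k x].

Definition is_lebesgue_Rn (mu : {measure set (n.-tuple R) -> \bar R}) : Prop :=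
  forall a b : n.-tuple R, (forall i, tnth a i <= tnth b i) ->
    mu [set x | forall i, tnth a i < tnth x i <= tnth b i] =
    (\prod_(i < n) (tnth b i - tnth a i))%:E.

End Rn.

From HB Require Import structures.
From mathcomp Require Import all_boot all_order all_algebra.
From mathcomp Require Import all_classical all_reals all_analysis ess_sup_inf.
From mathcomp Require Import ring lra measurable_realfun zify.
Import Order.TTheory GRing.Theory Num.Theory.
Local Open Scope ring_scope.
Local Open Scope classical_set_scope.

(* Cut Q(B_R)_1 \cap F along the unit cubes C = k + Q contained in B_R and let
   a = |C \cap F|, b = |C \ F|; translation invariance of Lebesgue measure
   gives a + b = 1.  By (K4) and translation invariance K >= kappa3 on C x C,
   so C contributes at least kappa3 a b to the interaction term.  As g is
   periodic with zero mean, its integral over C vanishes, hence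
   |int_(C \cap F) g| = |int_(C \ F) g| <= (kappa3 / 2) min(a, b) <= kappa3 a b. *)

(* The integrand x |-> \int_(F^c) K x y is not known to be measurable, so
   monotonicity is proved from the definition of the integral of a
   nonnegative function as a supremum over simple functions. *)
Section ge0_integral_nonmeasurable.
Context d (T : measurableType d) (R : realType) (mu : {measure set T -> \bar R}).
Local Open Scope ereal_scope.

Lemma ge0_le_integral_nonmeasurable (D : set T) (f1 f2 : T -> \bar R) :
  (forall x, D x -> 0 <= f1 x) -> (forall x, D x -> f1 x <= f2 x) ->
  \int[mu]_(x in D) f1 x <= \int[mu]_(x in D) f2 x.
Proof.
move=> f10 f12.
have f20 x : D x -> 0 <= f2 x by move=> Dx; exact: le_trans (f10 x Dx) (f12 x Dx).
rewrite (ge0_integralE mu f10) (ge0_integralE mu f20).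
apply: ereal_sup_le => _ [h hle <-]; exists h => //= x.
apply: le_trans (hle x) _; rewrite /patch; case: ifP => // /set_mem Dx.
exact: f12.
Qed.

Lemma ge0_subset_integral_nonmeasurable (A B : set T) (f : T -> \bar R) :
  A `<=` B -> (forall x, B x -> 0 <= f x) ->
  \int[mu]_(x in A) f x <= \int[mu]_(x in B) f x.
Proof.
move=> AB f0; rewrite (integral_mkcond A) (integral_mkcond B).
apply: ge0_le_integral_nonmeasurable => x _; rewrite /patch.
- by case: ifP => // /set_mem /AB /f0.
case: ifP => [/set_mem Ax|_]; first by rewrite ifT //; exact/mem_set/AB.
by case: ifP => // /set_mem /f0.
Qed.

End ge0_integral_nonmeasurable.

Section boxes.
Context {R : realType} {n : nat}.
Implicit Types (a b x : n.-tuple R) (m : nat).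

Definition box a b : set (n.-tuple R) :=
  [set x | forall i, tnth a i < tnth x i <= tnth b i].

Definition boxes : set (set (n.-tuple R)) :=
  [set B | exists ab : n.-tuple R * n.-tuple R, B = box ab.1 ab.2].

Lemma measurable_tnth_itv i (I : interval R) :
  measurable ((fun x : n.-tuple R => tnth x i) @^-1` [set` I]).
Proof. by rewrite -[X in measurable X]setTI; exact: measurable_tnth. Qed.

Lemma box_bigcap a b :
  box a b = \bigcap_(i in [set: 'I_n])
              ((fun x => tnth x i) @^-1` `]tnth a i, tnth b i]).
Proof.
apply/seteqP; split => x /=.
  by move=> h i _; rewrite /= in_itv /=; exact: h.
by move=> h i; have := h i I; rewrite /= in_itv.
Qed.

Lemma box_measurable a b : measurable (box a b).
Proof.
rewrite box_bigcap; apply: fin_bigcap_measurable => [|i _].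
  exact: finite_finset.
exact: measurable_tnth_itv.
Qed.

Lemma box_eq0 a b i : tnth b i < tnth a i -> box a b = set0.
Proof.
move=> ba; apply/seteqP; split => // x /= /(_ i) /andP[ax xb].
by have := lt_le_trans ax xb; rewrite ltNge (ltW ba).
Qed.

Lemma boxes_setI : setI_closed boxes.
Proof.
move=> _ _ [[a b] ->] [[a' b'] ->] /=.
exists ([tuple Num.max (tnth a i) (tnth a' i) | i < n],
        [tuple Num.min (tnth b i) (tnth b' i) | i < n]) => /=.
apply/seteqP; split => x /=.
  by move=> [h1 h2] i; rewrite !tnth_mktuple gt_max le_min;
   case/andP: (h1 i) => -> ->; case/andP: (h2 i) => -> ->.
move=> h; split => i; have := h i; rewrite !tnth_mktuple gt_max le_min;
  by case/andP => /andP[? ?] /andP[? ?]; apply/andP.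
Qed.

Lemma exists_nat_bound_tnth x : exists m, forall i, - m%:R < tnth x i <= m%:R.
Proof.
set M := \sum_(i < n) `|tnth x i|.
have M0 : 0 <= M by apply: sumr_ge0.
exists (Num.bound M) => i.
have xiM : `|tnth x i| <= M by rewrite /M (bigD1 i) //= lerDl; apply: sumr_ge0.
by have := le_lt_trans xiM (archi_boundP M0); rewrite ltr_norml => /andP[-> /ltW ->].
Qed.

Definition centered_box m : set (n.-tuple R) :=
  box [tuple - m%:R | i < n] [tuple m%:R | i < n].

Lemma bigcup_centered_box : \bigcup_m centered_box m = setT.
Proof.
apply/seteqP; split => // x _; have [m hm] := exists_nat_bound_tnth x.
by exists m => // i; rewrite !tnth_mktuple; exact: hm.
Qed.

Definition slab_lo i (a : R) m : n.-tuple R :=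
  [tuple if j == i then a else - m%:R | j < n].
Definition slab_hi i (b : R) m : n.-tuple R :=
  [tuple if j == i then b else m%:R | j < n].

Lemma preimage_tnth_itv_oc i (a b : R) :
  (fun x : n.-tuple R => tnth x i) @^-1` `]a, b] =
  \bigcup_m box (slab_lo i a m) (slab_hi i b m).
Proof.
apply/seteqP; split => x /=.
  rewrite in_itv /= => xi; have [m hm] := exists_nat_bound_tnth x.
  by exists m => // j; rewrite !tnth_mktuple; case: eqP => [->|_] //; exact: hm.
by move=> [m _ /(_ i)]; rewrite !tnth_mktuple eqxx in_itv.
Qed.

Lemma measurable_boxesE : measurable = <<s boxes >>.
Proof.
apply/seteqP; split; last first.
  apply: smallest_sub; first exact: sigma_algebra_measurable.
  by move=> _ [[a b] ->]; exact: box_measurable.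
have tnth_gen i : forall B : set R, measurable B ->
    <<s boxes >> ((fun x : n.-tuple R => tnth x i) @^-1` B).
  have sA : sigma_algebra setT
      [set B : set R | <<s boxes >> ((fun x : n.-tuple R => tnth x i) @^-1` B)].
    split.
    - by rewrite /= preimage_set0; exact: sigma_algebra0.
    - move=> A /= hA; rewrite setTD preimage_setC -setTD.
      exact: sigma_algebraCD.
    - by move=> A hA /=; rewrite preimage_bigcup; exact: sigma_algebra_bigcup.
  apply: smallest_sub => //.
  move=> B /= /ocitvP [->|[[a b] /= _ ->]].
    by rewrite preimage_set0; exact: sigma_algebra0.
  rewrite preimage_tnth_itv_oc; apply: sigma_algebra_bigcup => m.
  by apply: sub_sigma_algebra; exists (slab_lo i a m, slab_hi i b m).
apply: smallest_sub; first exact: smallest_sigma_algebra.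
rewrite -bigcup_seq => A [i _ [B mB <-]].
by rewrite setTI; exact: tnth_gen.
Qed.

End boxes.

Lemma vaddC {R : realType} {n : nat} (x y : n.-tuple R) : vadd x y = vadd y x.
Proof. by apply: eq_from_tnth => i; rewrite /vadd !tnth_mktuple addrC. Qed.

Lemma vsubK {R : realType} {n : nat} (v x : n.-tuple R) : vadd (vsub x v) v = x.
Proof. by apply: eq_from_tnth => i; rewrite /vadd /vsub !tnth_mktuple subrK. Qed.

Lemma vaddKl {R : realType} {n : nat} (v x : n.-tuple R) : vsub (vadd v x) v = x.
Proof. by apply: eq_from_tnth => i; rewrite /vadd /vsub !tnth_mktuple addrC addKr. Qed.

Section translation_invariance.
Context {R : realType} {n : nat}.
Variable mu : {measure set (n.-tuple R) -> \bar R}.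
Hypothesis hmu : is_lebesgue_Rn mu.

Lemma measurable_vsub (v : n.-tuple R) :
  measurable_fun [set: n.-tuple R] (vsub ^~ v).
Proof.
apply/measurable_fun_tnthP => i.
have -> : (fun x => tnth x i) \o vsub ^~ v = (fun x => tnth x i - tnth v i).
  by apply/funext => x; rewrite /= /vsub tnth_mktuple.
by apply: measurable_funB => //; exact: measurable_tnth.
Qed.

Lemma preimage_vsub_box (v a b : n.-tuple R) :
  vsub ^~ v @^-1` box a b = box (vadd a v) (vadd b v).
Proof.
by apply/seteqP; split => x /= h i; have := h i;
  rewrite /vsub /vadd !tnth_mktuple ltrBrDr lerBlDr.
Qed.

Lemma mu_box_vadd (v a b : n.-tuple R) :
  mu (box (vadd a v) (vadd b v)) = mu (box a b).
Proof.
have [ab|/existsNP [i /negP]] := pselect (forall i, tnth a i <= tnth b i).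
  rewrite /box !hmu //; last by move=> i; rewrite /vadd !tnth_mktuple lerD2r.
  by congr (_%:E); apply: eq_bigr => i _; rewrite /vadd !tnth_mktuple opprD addrACA subrr addr0.
rewrite -ltNge => ba; rewrite (box_eq0 _ _ _ ba) (@box_eq0 _ _ _ _ i) ?measure0 //.
by rewrite /vadd !tnth_mktuple ltrD2r.
Qed.

(* Both measures agree on boxes, a pi-system generating the sigma-algebra
   and exhausting R^n by boxes of finite measure. *)
Lemma mu_preimage_vsub (v : n.-tuple R) A :
  measurable A -> mu (vsub ^~ v @^-1` A) = mu A.
Proof.
move=> mA; have mv := measurable_vsub v.
apply: (@measure_unique _ R _ boxes centered_box measurable_boxesE boxes_setI
  _ bigcup_centered_box (pushforward mu (vsub ^~ v)) mu) => //.
- by move=> m; exists ([tuple - m%:R | i < n], [tuple m%:R | i < n]).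
- move=> _ [[a b] ->].
  change (mu (vsub ^~ v @^-1` box a b) = mu (box a b)).
  by rewrite preimage_vsub_box mu_box_vadd.
- move=> m; change (mu (vsub ^~ v @^-1` centered_box m) < +oo)%E.
  rewrite preimage_vsub_box mu_box_vadd /centered_box hmu ?ltry //.
  by move=> i; rewrite !tnth_mktuple -(lerD2r m%:R) addNr addr_ge0.
Qed.

End translation_invariance.

Section unit_cubes.
Context {R : realType} {n : nat}.
Variable mu : {measure set (n.-tuple R) -> \bar R}.
Hypothesis hmu : is_lebesgue_Rn mu.

Lemma cubeQ_measurable : measurable (@cubeQ R n).
Proof.
have -> : @cubeQ R n = \bigcap_(i in [set: 'I_n])
    ((fun x => tnth x i) @^-1` `]0, 1[).
  apply/seteqP; split => x /=.
    by move=> h i _; rewrite /= in_itv /=; exact: h.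
  by move=> h i; have := h i I; rewrite /= in_itv.
apply: fin_bigcap_measurable => [|i _]; first exact: finite_finset.
exact: measurable_tnth_itv.
Qed.

Lemma cube_atE (k : n.-tuple int) :
  cube_at k = vsub ^~ (intvec k) @^-1` (@cubeQ R n).
Proof.
apply/seteqP; split => x /=; first by move=> [q qQ ->]; rewrite vaddKl.
by move=> xQ; exists (vsub x (intvec k)) => //; rewrite vaddC vsubK.
Qed.

Lemma cube_at_measurable k : measurable (@cube_at R n k).
Proof.
rewrite cube_atE -[X in measurable X]setTI.
exact: measurable_vsub cubeQ_measurable.
Qed.

Lemma cube_at_inj (k k' : n.-tuple int) x :
  @cube_at R n k x -> cube_at k' x -> k = k'.
Proof.
move=> [q qQ ->] [q' q'Q e]; apply: eq_from_tnth => i.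
have := congr1 (fun y => tnth y i) e; rewrite /vadd !tnth_mktuple => ei.
case/andP: (qQ i) => q0 q1; case/andP: (q'Q i) => q'0 q'1.
have h1 : tnth k i < tnth k' i + 1 by rewrite -(ltr_int R) intrD; lra.
have h2 : tnth k' i < tnth k i + 1 by rewrite -(ltr_int R) intrD; lra.
by apply/eqP; rewrite eq_le -!ltzD1 h1 h2.
Qed.

Definition vone : n.-tuple R := [tuple 1 | i < n].

Definition unit_box : set (n.-tuple R) := box vzero vone.

Definition unit_box_face i : set (n.-tuple R) :=
  unit_box `&` ((fun x => tnth x i) @^-1` [set 1]).

Lemma unit_box_face_measurable i : measurable (unit_box_face i).
Proof.
apply: measurableI; first exact: box_measurable.
by rewrite -[X in measurable X]setTI; exact: measurable_tnth.
Qed.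

Lemma mu_unit_box_face i : mu (unit_box_face i) = 0%E.
Proof.
apply/eqP; rewrite eq_le measure_ge0 andbT; apply/lee_addgt0Pr => e e0.
rewrite add0e.
set a := [tuple if j == i then 1 - e else 0 | j < n].
have -> : e%:E = mu (box a vone).
  rewrite /box hmu; last by move=> j; rewrite !tnth_mktuple; case: eqP => _; lra.
  rewrite (bigD1 i) //= big1 ?mulr1; last first.
    by move=> j /negbTE ji; rewrite !tnth_mktuple ji subr0.
  by rewrite !tnth_mktuple eqxx; congr (_%:E); ring.
apply: le_measure; rewrite ?inE; last 2 first.
- exact: box_measurable.
- move=> x [xbox /= xi] j; rewrite !tnth_mktuple.
  have := xbox j; rewrite !tnth_mktuple.
  by case: eqP => [->|_] //; rewrite xi => _; apply/andP; split; lra.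
exact: unit_box_face_measurable.
Qed.

Lemma mu_cubeQ : mu (@cubeQ R n) = 1%E.
Proof.
have mu_box : mu unit_box = 1%E.
  rewrite /unit_box /box hmu; last by move=> i; rewrite !tnth_mktuple.
  by rewrite big1 // => i _; rewrite !tnth_mktuple subr0.
have Qbox : cubeQ `<=` unit_box.
  by move=> x xQ i; rewrite !tnth_mktuple; case/andP: (xQ i) => -> /ltW ->.
have mD : measurable (unit_box `\` @cubeQ R n).
  by apply: measurableD; [exact: box_measurable|exact: cubeQ_measurable].
have null_faces : mu.-negligible (\big[setU/set0]_(i <- enum 'I_n) unit_box_face i).
  elim/big_ind: _ => [|A B|i _]; first exact: negligible_set0.
    exact: negligibleU.
  by apply/negligibleP; [exact: unit_box_face_measurable|exact: mu_unit_box_face].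
have mu_D : mu (unit_box `\` cubeQ) = 0%E.
  apply/negligibleP => //; apply: negligibleS null_faces => x [xbox /= xQ].
  have [i xi] : exists i, ~ (0 < tnth x i < 1) by apply/existsNP => h; exact: xQ.
  rewrite -bigcup_seq; exists i; first by rewrite /= mem_enum.
  split => //=.
  have := xbox i; rewrite !tnth_mktuple => /andP[x0 x1].
  by apply/eqP; rewrite eq_le x1 leNgt; apply/negP => x1'; apply: xi; rewrite x0.
rewrite -mu_box -[in RHS](setDUK Qbox) (measureU mu) ?setDIK //.
  by rewrite [X in _ + X](_ : _ = 0%E) ?adde0.
exact: cubeQ_measurable.
Qed.

Lemma mu_cube_at k : mu (@cube_at R n k) = 1%E.
Proof.
by rewrite cube_atE (mu_preimage_vsub _ hmu) ?mu_cubeQ //; exact: cubeQ_measurable.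
Qed.

End unit_cubes.

Section cube_pieces.
Context {R : realType} {n : nat}.
Variable mu : {measure set (n.-tuple R) -> \bar R}.
Hypothesis hmu : is_lebesgue_Rn mu.
Local Open Scope ereal_scope.

Lemma fin_num_mu_cube_atI k A :
  measurable A -> mu (@cube_at R n k `&` A) \is a fin_num.
Proof.
move=> mA; rewrite ge0_fin_numE ?measure_ge0 // (@le_lt_trans _ _ (mu (cube_at k))) //.
  apply: le_measure; rewrite ?inE; last exact: subIsetl.
    by apply: measurableI => //; exact: cube_at_measurable.
  exact: cube_at_measurable.
by rewrite (mu_cube_at _ hmu) ltry.
Qed.

Lemma mu_cube_atI_setC k F : measurable F ->
  mu (@cube_at R n k `&` F) + mu (cube_at k `&` ~` F) = 1.
Proof.
move=> mF; have mC := @cube_at_measurable R n k.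
rewrite -measureU; first by rewrite -setIUr setUCr setIT; exact: mu_cube_at.
- exact: measurableI.
- by apply: measurableI => //; exact: measurableC.
- by rewrite setIACA setICr setI0.
Qed.

End cube_pieces.

Lemma normr_le_twice_mul {R : realFieldType} (a b c u : R) :
  0 <= a -> 0 <= b -> a + b = 1 -> 0 <= c ->
  `|u| <= c * a -> `|u| <= c * b -> `|u| <= 2 * c * a * b.
Proof.
move=> a0 b0 ab1 c0 ua ub; have [le_ab|lt_ba] := leP a b.
- have : 0 <= c * a * (2 * b - 1) by rewrite !mulr_ge0 //; lra.
  by nra.
- have : 0 <= c * b * (2 * a - 1) by rewrite !mulr_ge0 //; lra.
  by nra.
Qed.

Section periodic_mean_zero.
Context {R : realType} {n : nat}.
Variable mu : {measure set (n.-tuple R) -> \bar R}.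
Hypothesis hmu : is_lebesgue_Rn mu.
Variables (g : n.-tuple R -> R) (c : R).
Hypothesis c0 : 0 <= c.
Hypothesis gmeas : measurable_fun [set: n.-tuple R] g.
Hypothesis gper : forall x (k : n.-tuple int), g (vadd x (intvec k)) = g x.
Hypothesis gmean : (\int[mu]_(x in cubeQ) (g x)%:E = 0)%E.
Hypothesis gae : \forall x \ae mu, ((`|g x|)%:E <= c%:E)%E.
Local Open Scope ereal_scope.

Lemma measurable_EFin_g D : measurable_fun D (fun x => (g x)%:E).
Proof.
exact: (measurable_EFinP D g).2 (measurable_funS measurableT (@subsetT _ D) gmeas).
Qed.

Lemma integral_abse_g_le D : measurable D ->
  \int[mu]_(x in D) `|(g x)%:E| <= c%:E * mu D.
Proof.
move=> mD; rewrite -(integral_cst mu mD).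
apply: ae_ge0_le_integral => //.
- exact: measurableT_comp (@abse_measurable R setT) (measurable_EFin_g D).
- by apply: filterS gae => x gx _; rewrite abse_EFin.
Qed.

Lemma abse_integral_g_le D : measurable D ->
  `|\int[mu]_(x in D) (g x)%:E| <= c%:E * mu D.
Proof.
move=> mD; apply: le_trans (integral_abse_g_le _ mD).
exact: le_abse_integral _ (measurable_EFin_g D).
Qed.

Lemma g_integrable D : measurable D -> mu D < +oo ->
  mu.-integrable D (fun x => (g x)%:E).
Proof.
move=> mD muD; apply/integrableP; split; first exact: measurable_EFin_g.
apply: le_lt_trans (integral_abse_g_le _ mD) _.
have : mu D \is a fin_num by rewrite ge0_fin_numE.
by move/fineK <-; rewrite -EFinM ltry.
Qed.

Lemma fin_num_integral_g D : measurable D -> mu D \is a fin_num ->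
  \int[mu]_(x in D) (g x)%:E \is a fin_num.
Proof.
move=> mD /fineK muD; rewrite -abse_fin_num ge0_fin_numE ?abse_ge0 //.
by rewrite (le_lt_trans (abse_integral_g_le _ mD)) // -muD -EFinM ltry.
Qed.

(* Translating by the integer vector k preserves both mu and g. *)
Lemma integral_g_cube_at (k : n.-tuple int) :
  \int[mu]_(x in cube_at k) (g x)%:E = 0.
Proof.
set phi := vsub ^~ (@intvec R n k).
have mphi : measurable_fun setT phi by exact: measurable_vsub.
have gphi x : g (phi x) = g x by rewrite -(gper (phi x) k) vsubK.
have mQ := @cubeQ_measurable R n.
have mQk : measurable (phi @^-1` cubeQ) by rewrite -cube_atE; exact: cube_at_measurable.
rewrite cube_atE -gmean.
transitivity (\int[mu]_(x in phi @^-1` cubeQ) ((fun y => (g y)%:E) \o phi) x).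
  by apply: eq_integral => x _ /=; rewrite gphi.
rewrite -integral_pushforward //; last first.
  apply: (eq_integrable _ (fun x => (g x)%:E)) => //; first by move=> x _ /=; rewrite gphi.
  by apply: g_integrable => //; rewrite -cube_atE (mu_cube_at _ hmu) ltry.
  exact: measurable_EFin_g.
apply: eq_measure_integral => A mA _.
by change (mu (phi @^-1` A) = mu A); rewrite (mu_preimage_vsub _ hmu).
Qed.

(* Zero mean on the cube gives [\int_(C & F) g = - \int_(C & ~F) g], so the
   integral is bounded by [c * min(|C & F|, |C & ~F|)]. *)
Lemma cube_at_g_estimate k F : measurable F ->
  0 <= (2 * c)%:E * mu (cube_at k `&` F) * mu (cube_at k `&` ~` F)
       + \int[mu]_(x in cube_at k `&` F) (g x)%:E.
Proof.
move=> mF; have mC := @cube_at_measurable R n k.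
have mCF : measurable (cube_at k `&` F) by exact: measurableI.
have mCnF : measurable (cube_at k `&` ~` F).
  by apply: measurableI => //; exact: measurableC.
have finF := fin_num_mu_cube_atI _ hmu k F mF.
have finnF := fin_num_mu_cube_atI _ hmu k (~` F) (measurableC mF).
have split0 : \int[mu]_(x in cube_at k `&` F) (g x)%:E
              + \int[mu]_(x in cube_at k `&` ~` F) (g x)%:E = 0.
  rewrite -integral_setU //; first by rewrite -setIUr setUCr setIT integral_g_cube_at.
  - exact: measurable_EFin_g.
  - by rewrite /disj_set setIACA setICr setI0.
set a := fine (mu (cube_at k `&` F)); set b := fine (mu (cube_at k `&` ~` F)).
have aE : mu (cube_at k `&` F) = a%:E by rewrite fineK.
have bE : mu (cube_at k `&` ~` F) = b%:E by rewrite fineK.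
set u := fine (\int[mu]_(x in cube_at k `&` F) (g x)%:E).
set v := fine (\int[mu]_(x in cube_at k `&` ~` F) (g x)%:E).
have uE : \int[mu]_(x in cube_at k `&` F) (g x)%:E = u%:E.
  by rewrite fineK // fin_num_integral_g.
have vE : \int[mu]_(x in cube_at k `&` ~` F) (g x)%:E = v%:E.
  by rewrite fineK // fin_num_integral_g.
have a0 : (0 <= a)%R by rewrite fine_ge0.
have b0 : (0 <= b)%R by rewrite fine_ge0.
have ab1 : (a + b = 1)%R.
  by apply: EFin_inj; rewrite EFinD -aE -bE; exact: mu_cube_atI_setC.
have uv0 : (u + v = 0)%R by apply: EFin_inj; rewrite EFinD -uE -vE.
have ua : (`|u| <= c * a)%R.
  by have := abse_integral_g_le _ mCF; rewrite uE aE abse_EFin -EFinM lee_fin.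
have ub : (`|u| <= c * b)%R.
  have := abse_integral_g_le _ mCnF; rewrite vE bE abse_EFin -EFinM lee_fin.
  by rewrite (_ : v = (- u)%R) ?normrN //; lra.
rewrite aE bE uE -!EFinM -EFinD lee_fin.
have := normr_le_twice_mul a b c u a0 b0 ab1 c0 ua ub.
have : (- u <= `|u|)%R by rewrite -normrN ler_norm.
lra.
Qed.

End periodic_mean_zero.

Section cubes_in_ball.
Context {R : realType} {n : nat}.

Lemma tnth_le_enorm (x : n.-tuple R) i : `|tnth x i| <= enorm x.
Proof.
rewrite /enorm -sqrtr_sqr ler_sqrt; last by apply: sumr_ge0 => j _; exact: sqr_ge0.
by rewrite (bigD1 i) //= lerDl; apply: sumr_ge0 => j _; exact: sqr_ge0.
Qed.

Lemma finite_bounded_intvec (m : nat) :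
  finite_set [set k : n.-tuple int | forall i, - m%:Z <= tnth k i <= m%:Z].
Proof.
set shift := fun t : n.-tuple 'I_m.*2.+1 =>
  [tuple (tnth t i)%:Z - m%:Z | i < n] : n.-tuple int.
apply: (@sub_finite_set _ _ (shift @` setT)); last exact: finite_image.
move=> k hk; exists [tuple inord (absz (tnth k i + m%:Z)) | i < n] => //.
apply: eq_from_tnth => i; rewrite /shift !tnth_mktuple.
have /andP[h1 h2] := hk i.
by rewrite inordK; lia.
Qed.

(* The centre of the cube [k + Q] lies in the ball, which bounds [k]. *)
Lemma cube_at_sub_ballO_bound (r : R) (k : n.-tuple int) (m : nat) :
  r <= m%:R -> cube_at k `<=` ballO r ->
  forall i, - m%:Z <= tnth k i <= m%:Z.
Proof.
move=> rm kB i.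
set h : n.-tuple R := [tuple 1/2 | i < n].
have hQ : cubeQ h by move=> j; rewrite tnth_mktuple; apply/andP; split; lra.
have := le_lt_trans (tnth_le_enorm _ i) (kB _ (ex_intro2 _ _ h hQ erefl)).
rewrite /vadd /intvec !tnth_mktuple ltr_norml => /andP[l1 l2].
have u1 : (tnth k i)%:~R < (m%:Z + 1)%:~R :> R by rewrite intrD; lra.
have u2 : (- m%:Z - 1)%:~R < (tnth k i)%:~R :> R by rewrite intrD intrN; lra.
rewrite ltr_int in u1; rewrite ltr_int in u2.
by apply/andP; split; lia.
Qed.

Lemma finite_cubes_sub_ballO (r : R) : 0 <= r ->
  finite_set [set k : n.-tuple int | cube_at k `<=` ballO r].
Proof.
move=> r0; apply: sub_finite_set (finite_bounded_intvec (Num.bound r)) => k.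
by apply: cube_at_sub_ballO_bound; exact/ltW/archi_boundP.
Qed.

Definition ball_cubes (r : R) : seq (n.-tuple int) :=
  finmap.enum_fset (fset_set [set k | cube_at k `<=` ballO r]).

Lemma uniq_ball_cubes (r : R) : uniq (ball_cubes r).
Proof. exact: finmap.fset_uniq. Qed.

Lemma ball_cubes_sub (r : R) k : 0 <= r ->
  k \in ball_cubes r -> cube_at k `<=` ballO r.
Proof.
by move=> r0; rewrite /ball_cubes in_fset_set ?inE //; exact: finite_cubes_sub_ballO.
Qed.

Lemma cubes_in_ballIE (r : R) (F : set (n.-tuple R)) : 0 <= r ->
  cubes_in_ball r `&` F = \big[setU/set0]_(k <- ball_cubes r) (cube_at k `&` F).
Proof.
move=> r0; rewrite bigsetU_fset_set; last exact: finite_cubes_sub_ballO.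
apply/seteqP; split => x /=; first by move=> [[k [kB kx]] Fx]; exists k.
by move=> [k kB [kx Fx]]; split => //; exists k.
Qed.

End cubes_in_ball.

Section cube_step.
Context {R : realType} {n : nat}.

Definition cube_step (s : seq (n.-tuple int)) (b : n.-tuple int -> R)
    (x : n.-tuple R) : R :=
  \sum_(k <- s) b k * \1_(cube_at k) x.

Lemma cube_stepE s b k x : uniq s -> k \in s -> cube_at k x ->
  cube_step s b x = b k.
Proof.
move=> us ks kx; rewrite /cube_step (big_rem k) //= indicE mem_set // mulr1.
rewrite big1_seq ?addr0 // => j /andP[_]; rewrite mem_rem_uniq // inE.
move=> /andP[jk _]; rewrite indicE memNset ?mulr0 // => jx.
by move/eqP: jk; apply; exact: cube_at_inj jx kx.
Qed.

Lemma measurable_cube_step s b : measurable_fun setT (cube_step s b).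
Proof.
apply: measurable_sum => k; apply: measurable_funM => //.
by apply: measurable_indic; exact: cube_at_measurable.
Qed.

End cube_step.

Section kernel_on_cubes.
Context {R : realType} {n : nat}.
Variable mu : {measure set (n.-tuple R) -> \bar R}.
Hypothesis hmu : is_lebesgue_Rn mu.
Variables (K : n.-tuple R -> n.-tuple R -> R) (kappa : R).
Hypothesis kappa0 : 0 <= kappa.
Hypothesis Kge0 : forall x y, 0 <= K x y.
Hypothesis Ktransl : forall x y w, K (vadd x w) (vadd y w) = K x y.
Hypothesis K_cubeQ : forall x y, cubeQ x -> cubeQ y -> kappa <= K x y.

Lemma K_cube_at k x y : cube_at k x -> cube_at k y -> kappa <= K x y.
Proof.
move=> [q qQ ->] [q' q'Q ->].
by rewrite (vaddC (intvec k) q) (vaddC (intvec k) q') Ktransl; exact: K_cubeQ.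
Qed.

Local Open Scope ereal_scope.

(* On [C & F] the inner integral is at least [kappa |C & ~F|], and the step
   function taking these values is measurable, so it can be summed cube by
   cube although the inner integral itself need not be measurable. *)
Lemma kernel_energy_ge_cubes (s : seq (n.-tuple int)) (B F : set (n.-tuple R)) :
  uniq s -> measurable F -> (forall k, k \in s -> cube_at k `<=` B) ->
  \sum_(k <- s) (kappa%:E * mu (cube_at k `&` F) * mu (cube_at k `&` ~` F))
  <= \int[mu]_(x in B `&` F) \int[mu]_(y in ~` F) (K x y)%:E.
Proof.
move=> us mF sB.
have mCF k : measurable (cube_at k `&` F) by apply: measurableI => //; exact: cube_at_measurable.
pose b k := fine (mu (cube_at k `&` ~` F)).
have bE k : mu (cube_at k `&` ~` F) = (b k)%:E.
  by rewrite fineK // fin_num_mu_cube_atI //; exact: measurableC.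
pose phi := cube_step s (fun k => kappa * b k)%R.
have phi0 x : (0 <= phi x)%R.
  apply: sumr_ge0 => k _; apply: mulr_ge0; last by rewrite indicE.
  by apply: mulr_ge0 => //; exact: fine_ge0.
have tI : trivIset [set` s] (fun k => cube_at k `&` F).
  by move=> i j _ _ [x [[ix _] [jx _]]]; exact: cube_at_inj ix jx.
have sum_phi : \sum_(k <- s) (kappa%:E * mu (cube_at k `&` F) * mu (cube_at k `&` ~` F))
    = \int[mu]_(x in \big[setU/set0]_(k <- s) (cube_at k `&` F)) (phi x)%:E.
  rewrite integral_bigsetU_EFin //; last first.
    by apply/measurable_EFinP; apply: measurable_funS (measurable_cube_step _ _).
  apply: eq_big_seq => k ks; rewrite bE muleAC -EFinM -integral_cst //.
  by apply: eq_integral => x /[!inE] -[kx _]; rewrite /phi (cube_stepE _ _ _ _ us ks kx).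
rewrite sum_phi; apply: (@le_trans _ _ (\int[mu]_(x in \big[setU/set0]_(k <- s)
    (cube_at k `&` F)) \int[mu]_(y in ~` F) (K x y)%:E)); last first.
  apply: ge0_subset_integral_nonmeasurable.
  - by rewrite -bigcup_seq => x [k ks [kx Fx]]; split => //; exact: (sB k ks x kx).
  - by move=> x _; apply: integral_ge0 => y _; rewrite lee_fin.
apply: ge0_le_integral_nonmeasurable => [x _|x]; first by rewrite lee_fin phi0.
rewrite -bigcup_seq => -[k /= ks [kx Fx]].
rewrite /phi (cube_stepE _ _ _ _ us ks kx) EFinM -bE -integral_cst //; last first.
  by apply: measurableI; [exact: cube_at_measurable|exact: measurableC].
apply: (@le_trans _ _ (\int[mu]_(y in cube_at k `&` ~` F) (K x y)%:E)).
  apply: ge0_le_integral_nonmeasurable => [y _|y [ky _]]; first by rewrite lee_fin.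
  by rewrite lee_fin; exact: K_cube_at kx ky.
apply: ge0_subset_integral_nonmeasurable; first exact: subIsetr.
by move=> y _; rewrite lee_fin.
Qed.

End kernel_on_cubes.

Theorem mainTheorem12 (R : realType) (n : nat) (hn : (2 <= n)%N)
  (mu : {measure set (n.-tuple R) -> \bar R}) (hmu : is_lebesgue_Rn mu)
  (K : n.-tuple R -> n.-tuple R -> R)
  (s1 s2 delta kappa1 kappa2 kappa3 : R)
  (g : n.-tuple R -> R)
  (Kmeas : measurable_fun [set: n.-tuple R * n.-tuple R] (fun p => K p.1 p.2))
  (Kge0 : forall x y, 0 <= K x y)
  (Ksym : forall x y, K y x = K x y)
  (Ktransl : forall x y w, K (vadd x w) (vadd y w) = K x y)
  (Krot : forall (M : 'M[R]_n) x y, is_SO M -> K (rotv M x) (rotv M y) = K x y)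
  (K2 : (\int[mu]_h (enorm h * K h vzero)%:E < +oo)%E)
  (hs1 : 0 < s1) (hs12 : s1 < 1/2) (hs21 : 1/2 < s2) (hs2 : s2 < 1)
  (hdelta : 0 < delta) (hk1 : 0 < kappa1) (hk12 : kappa1 <= kappa2)
  (K3 : forall x y, x != y ->
     kappa1 * (if enorm (vsub x y) < delta then 1 else 0)
       * enorm (vsub x y) `^ (- (n%:R) - 2 * s1) <= K x y /\
     K x y <= kappa2 * Num.min (enorm (vsub x y) `^ (- (n%:R) - 2 * s1))
                               (enorm (vsub x y) `^ (- (n%:R) - 2 * s2)))
  (hk3 : 0 < kappa3)
  (K4 : forall x y, cubeQ x -> cubeQ y -> kappa3 <= K x y)
  (gmeas : measurable_fun [set: n.-tuple R] g)
  (gper : forall x (k : n.-tuple int), g (vadd x (intvec k)) = g x)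
  (gmean : (\int[mu]_(x in cubeQ) (g x)%:E = 0)%E)
  (gnorm : (ess_sup mu (fun x => (`|g x|)%:E) <= (kappa3 / 2)%:E)%E) :
  forall (F : set (n.-tuple R)) (r : R), measurable F -> 1 < r ->
  (0 <= \int[mu]_(x in ballO r `&` F) \int[mu]_(y in ~` F) (K x y)%:E
        + \int[mu]_(x in cubes_in_ball r `&` F) (g x)%:E)%E.
Proof.
move=> F r mF r1; have r0 : 0 <= r by lra.
have gae : \forall x \ae mu, ((`|g x|)%:E <= (kappa3 / 2)%:E)%E by apply/ess_supP.
have kernel_bound := @kernel_energy_ge_cubes R n mu hmu K kappa3 (ltW hk3)
  Kge0 Ktransl K4 (ball_cubes r) (ballO r) F (uniq_ball_cubes r) mF
  (fun k => ball_cubes_sub _ k r0).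
apply: le_trans (leeD2r _ kernel_bound).
rewrite cubes_in_ballIE // integral_bigsetU_EFin ?uniq_ball_cubes //; last 3 first.
- by move=> k; apply: measurableI => //; exact: cube_at_measurable.
- by move=> i j _ _ [x [[ix _] [jx _]]]; exact: cube_at_inj ix jx.
- exact: measurable_EFin_g _ gmeas _.
rewrite -big_split /=; apply: sume_ge0 => k _.
have c0 : 0 <= kappa3 / 2 by lra.
have := @cube_at_g_estimate R n mu hmu g (kappa3 / 2) c0 gmeas gper gmean gae k F mF.
by rewrite mulrC divfK ?gt_eqF.
Qed.
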